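(* Let $d\geq 2$ and $R\geq 1$ be integers and let $T_{d,R}$ be the rooted tree described below. Then the largest adjacency eigenvalue and the largest laplacian eigenvalue of $T_{d,R}$ are $$\alpha_{\max}=2\sqrt{d-1}\,\cos\frac{\pi}{R+2},\qquad \lambda_{\max}=d+2\sqrt{d-1}\,\cos\frac{\pi}{R+1}.$$
   Context: $T_{d,R}$ is the finite tree with a root vertex of degree $d-1$, all of whose pendant vertices (leaves) lie at distance exactly $R$ from the root, and all of whose remaining (intermediate) vertices have degree $d$. The adjacency eigenvalues are the eigenvalues of the adjacency matrix $A$; the laplacian eigenvalues are the eigenvalues of $L=\mathrm{diag}(\deg)-A$. *)

From HB Require Import structures.
From mathcomp Require Import all_boot all_order all_algebra.
Set Implicit Arguments. Unset Strict Implicit. Unset Printing Implicit Defensive.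
Import Order.TTheory GRing.Theory Num.Theory.
Local Open Scope ring_scope.

(* Vertices of T_{d,R}: words over the alphabet 'I_(d-1) of length k <= R.
   The empty word is the root; words of length R are the leaves. *)
Definition tvert (d R : nat) : finType := {k : 'I_R.+1 & k.-tuple 'I_(d.-1)}.

Definition tchild (d R : nat) (u v : tvert d R) : bool :=
  (val (tag v) == (val (tag u)).+1)%N &&
  (take (val (tag u)) (val (tagged v)) == val (tagged u)).

Definition tedge (d R : nat) (u v : tvert d R) : bool :=
  tchild u v || tchild v u.

Definition tdeg (d R : nat) (u : tvert d R) : nat := #|[set v | tedge u v]|.

Notation tN d R := #|tvert d R|.

Definition adjT (F : nzRingType) (d R : nat) : 'M[F]_(tN d R) :=
  \matrix_(i, j) (tedge (enum_val i) (enum_val j))%:R.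

Definition lapT (F : nzRingType) (d R : nat) : 'M[F]_(tN d R) :=
  \matrix_(i, j) ((i == j)%:R * (tdeg (enum_val i))%:R
                  - (tedge (enum_val i) (enum_val j))%:R).

Definition largest_eigenvalue (F : realFieldType) (n : nat) (M : 'M[F]_n) (a : F) :=
  eigenvalue M a /\ forall b, eigenvalue M b -> b <= a.

From HB Require Import structures.
From mathcomp Require Import all_boot all_order all_algebra.
From mathcomp Require Import all_classical all_reals all_analysis.
From mathcomp Require Import zify ring.
Import Order.TTheory GRing.Theory Num.Theory.
Local Open Scope ring_scope.
Set Implicit Arguments. Unset Strict Implicit.

(* Both matrices act on radial vectors (functions of the depth k) by a
   three-term recurrence, since a vertex at depth k has one parent if k > 0 and
   d - 1 children if k < R.  With s = sqrt(d - 1), the radial vector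
   s^-k sin((k+1)θ), θ = π/(R+2), is a positive eigenvector of A for
   2 s cos θ: the recurrence is that of sin(kθ), and the boundary conditions
   are sin 0 = sin((R+2)θ) = 0.  The tree is bipartite, so flipping signs on
   odd depths turns L into the signless laplacian D + A, and for θ = π/(R+1)
   the radial vector s^-k (sin(kθ) + s sin((k+1)θ)) is a positive
   eigenvector of D + A for d + 2 s cos θ.  By the Collatz-Wielandt bound, a
   positive eigenvector of a matrix with nonnegative off-diagonal entries
   belongs to its largest eigenvalue. *)

Section TreeCombinatorics.
Variables d R : nat.
Implicit Types u v : tvert d R.

Definition depth u : nat := val (tag u).

Definition troot : tvert d R :=
  Tagged (fun k : 'I_R.+1 => k.-tuple 'I_d.-1) ([tuple] : (ord0 : 'I_R.+1).-tuple _).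

Lemma depth_le u : (depth u <= R)%N.
Proof. by rewrite -ltnS ltn_ord. Qed.

Lemma tchild_depth u v : tchild u v -> depth v = (depth u).+1.
Proof. by case/andP => /eqP. Qed.

Lemma tedge_sym u v : tedge u v = tedge v u.
Proof. by rewrite /tedge orbC. Qed.

Lemma tedge_irrefl u : tedge u u = false.
Proof. by rewrite /tedge orbb; apply/negP => /tchild_depth /n_Sn. Qed.

Lemma tedge_odd u v : tedge u v -> odd (depth u + depth v).
Proof.
by case/orP => /tchild_depth ->; rewrite ?addSn ?addnS /= addnn odd_double.
Qed.

Lemma tvert_eq u v : depth u = depth v -> val (tagged u) = val (tagged v) -> u = v.
Proof.
case: u v => [[k hk] t] [[k' hk'] t'] ek; rewrite /depth /= in ek; subst k'.
rewrite (bool_irrelevance hk' hk) => et.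
by congr existT; apply: val_inj.
Qed.

Lemma card_children u :
  #|[pred v | tchild u v]| = if (depth u < R)%N then d.-1 else 0%N.
Proof.
case: u => [[k hk] t]; rewrite /depth /=.
case: ltnP => hkR; last first.
  apply: eq_card0 => v; rewrite inE; apply/negP => /tchild_depth ev.
  by have := depth_le v; rewrite ev ltnNge hkR.
pose child (c : 'I_d.-1) : tvert d R :=
  Tagged (fun k : 'I_R.+1 => k.-tuple 'I_d.-1)
    (rcons_tuple t c : (Ordinal (hkR : (k.+1 < R.+1)%N)).-tuple _).
have child_inj : injective child.
  move=> c1 c2 /(congr1 (fun v : tvert d R => val (tagged v))); exact: rcons_injr.
rewrite -[in RHS](card_ord d.-1) -(card_imset _ child_inj).
apply: eq_card => v; rewrite inE; apply/andP/imsetP => [[/eqP ev /eqP et]|].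
  case: v ev et => [[k' hk'] t'] /= ek; subst k'.
  case: t' => [[|x s] /= hs] //= et.
  exists (last x s) => //; apply: tvert_eq => //=.
  rewrite lastI; congr rcons.
  by rewrite -et lastI -cats1 take_size_cat // size_belast; case/eqP: hs.
case=> c _ ->; split => //=.
by rewrite -cats1 take_size_cat // size_tuple.
Qed.

Lemma card_parents u : #|[pred v | tchild v u]| = (0 < depth u)%N.
Proof.
case: u => [[[|k] hk] t]; rewrite /depth /=.
  by apply: eq_card0 => v; rewrite inE; apply/negP => /tchild_depth.
have hs : size (take k t) == k by rewrite size_take size_tuple ltnSn.
pose parent : tvert d R :=
  Tagged (fun k : 'I_R.+1 => k.-tuple 'I_d.-1) (Tuple hs : (Ordinal (ltnW hk)).-tuple _).
apply: (@fintype.eq_card1 _ parent) => v.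
rewrite inE; apply/andP/eqP => [[/eqP ev /eqP et]|->].
  case: ev => ev; apply: tvert_eq; rewrite /depth //= -et /=.
  by move: (tval t) => s; rewrite ev.
by split.
Qed.

Lemma natr_tedge (K : nzSemiRingType) u v :
  (tedge u v)%:R = (tchild u v)%:R + (tchild v u)%:R :> K.
Proof.
rewrite /tedge; case h1: (tchild u v); case h2: (tchild v u); rewrite ?addr0 ?add0r //.
by move: (tchild_depth h1) (tchild_depth h2); lia.
Qed.

Lemma sum_depth_const (K : nzSemiRingType) (P : pred (tvert d R)) m (f : nat -> K) :
  (forall v, P v -> depth v = m) ->
  \sum_v (P v)%:R * f (depth v) = #|P|%:R * f m.
Proof.
move=> Pm; rewrite -sum1_card natr_sum mulr_suml [RHS]big_mkcond.
by apply: eq_bigr => v _; rewrite unfold_in; case Pv: (P v); rewrite ?mul0r // Pm.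
Qed.

Definition radial_nbr (K : nzSemiRingType) (f : nat -> K) (k : nat) : K :=
  (0 < k)%:R * f k.-1 + (k < R)%:R * (d.-1)%:R * f k.+1.

Lemma sum_tedge_radial (K : nzSemiRingType) (f : nat -> K) u :
  \sum_v (tedge u v)%:R * f (depth v) = radial_nbr f (depth u).
Proof.
under eq_bigr => v _ do rewrite natr_tedge mulrDl addrC.
rewrite big_split /= (@sum_depth_const _ _ (depth u).-1); last by move=> v /tchild_depth ->.
rewrite (@sum_depth_const _ _ (depth u).+1); last by move=> v /tchild_depth ->.
by rewrite card_parents card_children /radial_nbr; case: (depth u < R)%N; rewrite ?mul1r ?mul0r.
Qed.

Lemma natr_tdeg (K : nzSemiRingType) u : (tdeg u)%:R = radial_nbr (fun=> 1 : K) (depth u).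
Proof.
rewrite -sum_tedge_radial /tdeg cardsE -sum1_card natr_sum big_mkcond /=.
by apply: eq_bigr => v _; rewrite mulr1 unfold_in /tedge; case: (_ || _).
Qed.

End TreeCombinatorics.

Section RadialVectors.
Variables (K : comNzRingType) (d R : nat).
Implicit Type f : nat -> K.

Definition radial f : 'rV[K]_(tN d R) := \row_i f (depth (enum_val i)).

Lemma radial_mul_adjT f j :
  (radial f *m adjT K d R) 0 j = radial_nbr d R f (depth (enum_val j)).
Proof.
rewrite mxE -sum_tedge_radial.
under eq_bigr => i _ do rewrite !mxE tedge_sym mulrC.
by rewrite -(big_enum_val (fun v => (tedge (enum_val j) v)%:R * f (depth v))).
Qed.

Lemma radial_mul_lapT f j (k := depth (enum_val j)) :
  (radial f *m lapT K d R) 0 j = radial_nbr d R (fun=> 1) k * f k - radial_nbr d R f k.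
Proof.
rewrite mxE; under eq_bigr do rewrite !mxE mulrBr.
rewrite sumrB (bigD1 j) //= big1 => [|i /negbTE ij]; last by rewrite ij mul0r mulr0.
rewrite eqxx mul1r addr0 natr_tdeg mulrC -(radial_mul_adjT f) mxE.
by congr (_ - _); apply: eq_bigr => i _; rewrite !mxE.
Qed.

Lemma radial_nbr_sign f k :
  radial_nbr d R (fun m => (-1) ^+ m * f m) k = - ((-1) ^+ k * radial_nbr d R f k).
Proof. by case: k => [|k]; rewrite /radial_nbr /= !exprS; ring. Qed.

End RadialVectors.

Lemma eigenvalue_le_pos_weights (K : realFieldType) n (M : 'M[K]_n) (x : 'I_n -> K) a b :
  (forall i, 0 < x i) ->
  (forall j, M j j * x j + \sum_(i | i != j) x i * `|M i j| <= a * x j) ->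
  eigenvalue M b -> b <= a.
Proof.
move=> xpos hM /eigenvalueP [v hv vnz].
have [j0 vj0] : exists j, v 0 j != 0.
  apply/existsP; apply: contraNT vnz; rewrite negb_exists => /forallP v0.
  by apply/eqP/rowP => j; rewrite mxE; apply/eqP/negPn.
pose ratio j := `|v 0 j| / x j.
have [j _ ratio_max] := @arg_maxP _ _ _ j0 predT ratio isT.
set r := ratio j in ratio_max.
have r_gt0 : 0 < r.
  by apply: lt_le_trans (ratio_max j0 isT); rewrite divr_gt0 ?normr_gt0.
have v_le i : `|v 0 i| <= r * x i by rewrite -ler_pdivrMr //; exact: ratio_max.
have vj : `|v 0 j| = r * x j by rewrite /r /ratio divfK // gt_eqF.
have vj_gt0 : 0 < `|v 0 j| by rewrite vj mulr_gt0.
have ev_j : (b - M j j) * v 0 j = \sum_(i | i != j) v 0 i * M i j.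
  move/rowP/(_ j): hv; rewrite !mxE (bigD1 j) //= => hv.
  by rewrite mulrBl -hv (mulrC (M j j)) addrAC subrr add0r.
have : `|b - M j j| * `|v 0 j| <= (a - M j j) * `|v 0 j|.
  rewrite -normrM ev_j (le_trans (ler_norm_sum _ _ _)) //.
  apply: (@le_trans _ _ (\sum_(i | i != j) r * (x i * `|M i j|))).
    by apply: ler_sum => i _; rewrite normrM mulrA ler_wpM2r.
  by rewrite -mulr_sumr vj mulrCA ler_wpM2l ?(ltW r_gt0) // mulrBl lerBrDl.
rewrite ler_pM2r // => hb.
by rewrite -(lerD2r (- M j j)) (le_trans (ler_norm _) hb).
Qed.

(* Conjugating by the diagonal sign matrix [sg] makes [M] nonnegative off the
   diagonal, and the positive eigenvector [x] then attains the bound above. *)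
Lemma largest_eigenvalue_signed_pos_eigenvector (K : realFieldType) n (M : 'M[K]_n)
    (sg x : 'I_n -> K) a (i0 : 'I_n) :
  (forall i, `|sg i| = 1) -> (forall i, 0 < x i) ->
  (forall i j, i != j -> 0 <= sg i * sg j * M i j) ->
  \row_i (sg i * x i) *m M = a *: \row_i (sg i * x i) ->
  largest_eigenvalue M a.
Proof.
move=> sg_norm xpos sgM hv.
have sgK i : sg i * sg i = 1 by rewrite -expr2 -real_normK ?num_real // sg_norm expr1n.
split=> [|b].
  apply/eigenvalueP; exists (\row_i (sg i * x i)) => //.
  apply/eqP => /rowP/(_ i0)/eqP; rewrite !mxE mulf_eq0 (gt_eqF (xpos i0)) orbF.
  by rewrite -normr_eq0 sg_norm oner_eq0.
apply: eigenvalue_le_pos_weights xpos _ => j.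
have normM i : i != j -> `|M i j| = sg i * sg j * M i j.
  move=> ij; rewrite -[LHS]mul1r -(sg_norm i) -[LHS]mul1r -(sg_norm j) -!normrM.
  by rewrite mulrCA mulrA ger0_norm // sgM.
move/rowP/(_ j): hv; rewrite !mxE (bigD1 j) //= => hv.
rewrite le_eqVlt; apply/orP; left; apply/eqP.
rewrite -[a * x j]mul1r -(sgK j) -mulrA -(mulrCA a) -hv mulrDr.
congr (_ + _); first by rewrite mxE !mulrA sgK mul1r mulrC.
rewrite mulr_sumr; apply: eq_bigr => i ij; rewrite !mxE normM //; ring.
Qed.

Section DampedSine.
Variables (K : realType) (s th : K).
Hypothesis s_gt0 : 0 < s.

Definition dsin (k : nat) : K := s^-1 ^+ k * sin (k%:R * th).

Lemma dsin0 : dsin 0 = 0.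
Proof. by rewrite /dsin mul0r sin0 mulr0. Qed.

Lemma dsin_pi n : n%:R * th = pi -> dsin n = 0.
Proof. by move=> nth; rewrite /dsin nth sinpi mulr0. Qed.

Lemma dsin_rec k : dsin k + s ^+ 2 * dsin k.+2 = 2 * s * cos th * dsin k.+1.
Proof.
have s_neq0 : s != 0 by rewrite gt_eqF.
rewrite /dsin.
have -> : k.+2%:R * th = k.+1%:R * th + th by rewrite -addn1 natrD mulrDl mul1r.
have -> : k%:R * th = k.+1%:R * th - th by rewrite -addn1 natrD mulrDl mul1r addrK.
by rewrite sinB sinD !exprS; field.
Qed.

Definition dsin_comb (k : nat) : K := dsin k + s ^+ 2 * dsin k.+1.

Lemma dsin_comb_rec k :
  dsin_comb k + s ^+ 2 * dsin_comb k.+2 = 2 * s * cos th * dsin_comb k.+1.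
Proof.
transitivity ((dsin k + s ^+ 2 * dsin k.+2) + s ^+ 2 * (dsin k.+1 + s ^+ 2 * dsin k.+3)).
  by rewrite /dsin_comb; ring.
by rewrite !dsin_rec /dsin_comb; ring.
Qed.

Lemma dsin_comb_first : s ^+ 2 * dsin_comb 1 = (1 + 2 * s * cos th) * dsin_comb 0.
Proof.
have := dsin_rec 0; rewrite dsin0 add0r => rec0.
by rewrite /dsin_comb dsin0 add0r mulrDr rec0; ring.
Qed.

Lemma dsin_comb_last n : n.+2%:R * th = pi ->
  dsin_comb n = (s ^+ 2 + 2 * s * cos th) * dsin_comb n.+1.
Proof.
move=> nth; have := dsin_rec n; rewrite (dsin_pi nth) mulr0 addr0 => rec.
by rewrite /dsin_comb (dsin_pi nth) mulr0 addr0 rec; ring.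
Qed.

Lemma dsin_gt0 n k : n%:R * th = pi -> (0 < k < n)%N -> 0 < dsin k.
Proof.
move=> nth /andP[k_gt0 kn]; have n_gt0 : (0 < n)%N by apply: leq_ltn_trans kn.
have th_gt0 : 0 < th by rewrite -(@pmulr_rgt0 _ n%:R) ?ltr0n // nth pi_gt0.
rewrite mulr_gt0 ?exprn_gt0 ?invr_gt0 //; apply: sin_gt0_pi.
by rewrite mulr_gt0 ?ltr0n //= -nth ltr_pM2r // ltr_nat.
Qed.

Lemma dsin_ge0 n k : n%:R * th = pi -> (k <= n)%N -> 0 <= dsin k.
Proof.
move=> nth; case: k => [_|k]; first by rewrite dsin0.
rewrite leq_eqVlt => /orP[/eqP ->|kn]; first by rewrite dsin_pi.
exact/ltW/(dsin_gt0 nth).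
Qed.

Lemma dsin_comb_gt0 n k : (0 < n)%N -> n.+1%:R * th = pi -> (k <= n)%N -> 0 < dsin_comb k.
Proof.
move=> n_gt0 nth kn; case: k kn => [|k] kn.
  by rewrite /dsin_comb dsin0 add0r mulr_gt0 ?exprn_gt0 // (dsin_gt0 nth).
apply: ltr_wpDr; last by rewrite (dsin_gt0 nth) // ltnS.
by rewrite mulr_ge0 ?exprn_ge0 ?(ltW s_gt0) ?(dsin_ge0 nth).
Qed.

End DampedSine.

Section Spectrum.
Variables (K : realType) (d R : nat) (s th : K).
Hypotheses (s_gt0 : 0 < s) (s_sqr : s ^+ 2 = (d.-1)%:R).

Lemma radial_nbr_dsin k : R.+2%:R * th = pi -> (k <= R)%N ->
  radial_nbr d R (fun m => dsin s th m.+1) k = 2 * s * cos th * dsin s th k.+1.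
Proof.
move=> Rth kR; rewrite /radial_nbr -s_sqr -(dsin_rec th s_gt0).
congr (_ + _); first by case: k {kR} => [|k]; rewrite /= ?dsin0 ?mul0r ?mul1r.
move: kR; rewrite leq_eqVlt => /orP[/eqP ->|->]; last by rewrite mul1r.
by rewrite ltnn (dsin_pi s Rth) !mulr0.
Qed.

Lemma radial_lap_dsin_comb k : (0 < R)%N -> R.+1%:R * th = pi -> (k <= R)%N ->
  radial_nbr d R (fun=> 1) k * dsin_comb s th k + radial_nbr d R (dsin_comb s th) k
  = (s ^+ 2 + 1 + 2 * s * cos th) * dsin_comb s th k.
Proof.
move=> R_gt0 Rth kR; rewrite /radial_nbr -s_sqr.
case: k kR => [|k] kR.
  by rewrite R_gt0 /= !(mul0r, mul1r, mulr1, add0r) (dsin_comb_first th s_gt0); ring.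
move: kR; rewrite leq_eqVlt => /orP[/eqP ek|kR]; last first.
  by rewrite kR /= !(mul1r, mulr1) (dsin_comb_rec th s_gt0); ring.
subst R; rewrite ltnn /= (dsin_comb_last s_gt0 Rth); ring.
Qed.

Lemma adjT_largest_eigenvalue : R.+2%:R * th = pi ->
  largest_eigenvalue (adjT K d R) (2 * s * cos th).
Proof.
move=> Rth; apply: (@largest_eigenvalue_signed_pos_eigenvector _ _ _
  (fun=> 1) (fun i : 'I_(tN d R) => dsin s th (depth (enum_val i)).+1) _
  (enum_rank (troot d R))).
- by move=> i; rewrite normr1.
- by move=> i; rewrite (dsin_gt0 s_gt0 Rth) // !ltnS depth_le.
- by move=> i j _; rewrite !mul1r mxE ler0n.
have -> : \row_i (1 * dsin s th (depth (enum_val i)).+1)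
    = radial d R (fun m => dsin s th m.+1).
  by apply/rowP => i; rewrite !mxE mul1r.
by apply/rowP => j; rewrite radial_mul_adjT radial_nbr_dsin ?depth_le // !mxE.
Qed.

Lemma lapT_largest_eigenvalue : (0 < R)%N -> R.+1%:R * th = pi -> d%:R = s ^+ 2 + 1 ->
  largest_eigenvalue (lapT K d R) (d%:R + 2 * s * cos th).
Proof.
move=> R_gt0 Rth d_eq; apply: (@largest_eigenvalue_signed_pos_eigenvector _ _ _
  (fun i : 'I_(tN d R) => (-1) ^+ depth (enum_val i))
  (fun i : 'I_(tN d R) => dsin_comb s th (depth (enum_val i))) _
  (enum_rank (troot d R))).
- by move=> i; rewrite normrX normrN1 expr1n.
- by move=> i; rewrite (dsin_comb_gt0 s_gt0 R_gt0 Rth) ?depth_le.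
- move=> i j ij; rewrite mxE (negbTE ij) mul0r sub0r mulrN -exprD -signr_odd.
  by case e: tedge; rewrite ?(tedge_odd e) ?mulr0 ?oppr0 // expr1 mulN1r opprK.
have -> : \row_i ((-1) ^+ depth (enum_val i) * dsin_comb s th (depth (enum_val i)))
    = radial d R (fun m => (-1) ^+ m * dsin_comb s th m).
  by apply/rowP => i; rewrite !mxE.
apply/rowP => j; rewrite radial_mul_lapT radial_nbr_sign !mxE.
set k := depth (enum_val j).
transitivity ((-1) ^+ k * (radial_nbr d R (fun=> 1) k * dsin_comb s th k
                           + radial_nbr d R (dsin_comb s th) k)); first by ring.
by rewrite radial_lap_dsin_comb ?depth_le // d_eq; ring.
Qed.

End Spectrum.

Theorem mainTheorem19 (K : realType) (d R : nat) (hd : (2 <= d)%N) (hR : (1 <= R)%N) :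
  largest_eigenvalue (adjT K d R)
    (2 * Num.sqrt (d%:R - 1) * cos (pi / (R%:R + 2))) /\
  largest_eigenvalue (lapT K d R)
    (d%:R + 2 * Num.sqrt (d%:R - 1) * cos (pi / (R%:R + 1))).
Proof.
set s := Num.sqrt (d%:R - 1 : K).
have d1 : (d.-1)%:R = d%:R - 1 :> K by rewrite -subn1 natrB // ltnW.
have s_gt0 : 0 < s by rewrite sqrtr_gt0 subr_gt0 ltr1n.
have s_sqr : s ^+ 2 = (d.-1)%:R by rewrite sqr_sqrtr ?d1 // subr_ge0 ler1n ltnW.
have pi_div n : n.+1%:R * (pi / n.+1%:R) = pi :> K by rewrite mulrC divfK ?pnatr_eq0.
split.
  apply: adjT_largest_eigenvalue => //.
  by rewrite -[2]/(2%:R) -natrD addn2 pi_div.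
apply: lapT_largest_eigenvalue => //.
- by rewrite -[1]/(1%:R) -natrD addn1 pi_div.
- by rewrite s_sqr d1 subrK.
Qed.
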